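(* Let $R$ be a local ring with maximal ideal $\mathfrak m\neq 0$ such that $\mathfrak m^2=0$ and $\mathfrak m=Rx=xR$ for all $x\in\mathfrak m\setminus\{0\}$, and fix $x\in\mathfrak m\setminus\{0\}$. Then for every homomorphism $f:P\to Q$ of free left $R$-modules (respectively finitely generated free left $R$-modules) there exist free (respectively finitely generated free) left $R$-modules $M,N,V,W$ and isomorphisms $P\cong M\oplus N\oplus V$, $Q\cong M\oplus N\oplus W$ under which $f$ corresponds to the map $M\oplus N\oplus V\to M\oplus N\oplus W$ given by the matrix $\begin{pmatrix}1&0&0\\0&\cdot x&0\\0&0&0\end{pmatrix}$, where $\cdot x:N\to N$ denotes right multiplication by $x$ coordinatewise with respect to a basis of $N$.
   Context: Local ring: unique maximal left ideal $\mathfrak m$ (two-sided). *)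

From HB Require Import structures.
From mathcomp Require Import all_boot all_algebra.
Set Implicit Arguments. Unset Strict Implicit. Unset Printing Implicit Defensive.
Import GRing.Theory.
Local Open Scope ring_scope.

Definition left_ideal (R : nzRingType) (I : R -> Prop) : Prop :=
  [/\ I 0, (forall a b, I a -> I b -> I (a + b)) & (forall r a, I a -> I (r * a))].

Definition maximal_left_ideal (R : nzRingType) (I : R -> Prop) : Prop :=
  [/\ left_ideal I, ~ I 1 &
      forall J : R -> Prop, left_ideal J -> ~ J 1 -> (forall a, I a -> J a) ->
        forall a, J a -> I a].

Definition local_with_max (R : nzRingType) (m : R -> Prop) : Prop :=
  maximal_left_ideal m /\
  forall J : R -> Prop, maximal_left_ideal J -> forall a, J a <-> m a.

Definition is_basis (R : nzRingType) (M : lmodType R) (I : eqType) (b : I -> M)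
  : Prop :=
  (forall v : M, exists (s : seq I) (c : I -> R), v = \sum_(i <- s) c i *: b i) /\
  (forall (s : seq I) (c : I -> R), uniq s ->
     \sum_(i <- s) c i *: b i = 0 -> forall i, i \in s -> c i = 0).

Definition free_lmod (R : nzRingType) (M : lmodType R) : Prop :=
  exists (I : eqType) (b : I -> M), is_basis b.

Definition fingen_lmod (R : nzRingType) (M : lmodType R) : Prop :=
  exists s : seq M, forall v : M,
    exists c : 'I_(size s) -> R, v = \sum_(i < size s) c i *: s`_i.

Definition fgfree_lmod (R : nzRingType) (M : lmodType R) : Prop :=
  free_lmod M /\ fingen_lmod M.

Definition rmul_coord (R : nzRingType) (N : lmodType R) (I : eqType) (b : I -> N)
  (x : R) (g : N -> N) : Prop :=
  forall (s : seq I) (c : I -> R),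
    g (\sum_(i <- s) c i *: b i) = \sum_(i <- s) (c i * x) *: b i.

Definition normal_form (R : nzRingType) (Fr : lmodType R -> Prop) (x : R)
  (P Q : lmodType R) (f : P -> Q) : Prop :=
  exists (M N V W : lmodType R),
    [/\ Fr M, Fr N, Fr V & Fr W] /\
    exists (phi : P -> (M * N * V)%type) (psi : Q -> (M * N * W)%type),
      [/\ linear phi, bijective phi, linear psi & bijective psi] /\
      exists (I : eqType) (b : I -> N) (g : N -> N),
        [/\ is_basis b, rmul_coord b x g &
            forall p : P, psi (f p) = ((phi p).1.1, g (phi p).1.2, 0)].

From HB Require Import structures.
From mathcomp Require Import all_boot all_algebra.
From mathcomp Require Import boolp classical_sets.
Set Implicit Arguments. Unset Strict Implicit. Unset Printing Implicit Defensive.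
Import GRing.Theory.
Local Open Scope ring_scope.
Local Open Scope classical_set_scope.

(* Write [k = R / m].  As [m = xR = Rx] and [m ^+ 2 = 0], reduction modulo [x] turns a free
   module [P] into the [k]-vector space [P / xP], and a set of vectors of [P] whose image is
   a basis of [P / xP] is a basis of [P]: its relations have coefficients in [m], hence of
   the form [x c], and free modules have no [x]-torsion.  By Zorn's lemma choose [A] in [P]
   with [f A] independent modulo [x] and spanning [f P] modulo [x]; then, among the [b] with
   [f b = x g b], choose [B] such that [f A] together with [g B] is independent modulo [x]
   and spans all such [g b] modulo [x].  Then [A] and [B] together are independent modulo
   [x] and, with [ker f], span [P]; so they extend by some [C] in [ker f] to a basis of [P],
   while [f A] and [g B] extend to a basis of [Q].  In these bases [f] is the identity on
   [A], right multiplication by [x] on [B] (as [f b = x g b]), and zero on [C]. *)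

(** * Maximal sets of finite character *)
Section FiniteCharacter.
Variables (T : eqType) (good : seq T -> Prop).

Definition finitely_good (S : set T) :=
  forall s : seq T, (forall e, e \in s -> S e) -> good s.

Lemma finitely_good_sub (S S' : set T) :
  S `<=` S' -> finitely_good S' -> finitely_good S.
Proof. by move=> sSS' gS' s sS; apply: gS' => e /sS /sSS'. Qed.

Lemma finitely_good_bigcup (S0 : set T) (F : set (set T)) :
  finitely_good S0 -> (forall X, F X -> finitely_good (S0 `|` X)) ->
  total_on F subset -> finitely_good (S0 `|` \bigcup_(X in F) X).
Proof.
move=> gS0 gF totF s hs.
suff [sS0|[X FX sX]] : (forall e, e \in s -> S0 e) \/
    exists2 X, F X & forall e, e \in s -> (S0 `|` X) e.
- exact: gS0.
- exact: gF FX _ sX.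
elim: s hs => [|e s IHs] hs; first by left=> e; rewrite in_nil.
have /IHs IH : forall e', e' \in s -> (S0 `|` \bigcup_(X in F) X) e'.
  by move=> e' he'; apply: hs; rewrite in_cons he' orbT.
have [S0e|[Y FY Ye]] := hs e (mem_head _ _); case: IH => [sS0|[X FX sX]].
- by left=> e'; rewrite in_cons => /orP[/eqP->|/sS0].
- by right; exists X => // e'; rewrite in_cons => /orP[/eqP->|/sX]; [left|].
- right; exists Y => // e'; rewrite in_cons => /orP[/eqP->|/sS0]; [right|left] => //.
- have [XY|YX] := totF X Y FX FY.
    right; exists Y => // e'; rewrite in_cons => /orP[/eqP->|/sX[]]; [right|left|right] => //.
    exact: XY.
  right; exists X => // e'; rewrite in_cons => /orP[/eqP->|/sX] //; right; exact: YX.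
Qed.

Lemma exists_maximal_finitely_good (S0 : set T) : finitely_good S0 ->
  exists S, [/\ S0 `<=` S, finitely_good S &
                forall y, finitely_good (S `|` [set y]) -> S y].
Proof.
(* adjoining [S0] to every member of a chain gives the empty chain an upper bound *)
move=> gS0.
have [A [gA maxA]] := Zorn_bigcup (P := fun A => finitely_good (S0 `|` A))
  (fun F gF => finitely_good_bigcup gS0 gF).
exists (S0 `|` A); split => //.
move=> y gy; apply: contrapT => nAy; apply: (maxA (A `|` [set y])).
  split; first exact: subsetUl.
  by move=> /(_ y (or_intror erefl)) Ay; apply: nAy; right.
by apply: finitely_good_sub gy; rewrite setUA.
Qed.

End FiniteCharacter.

(** * Linear combinations, bases and linear extension *)

Section LinearCombinations.
Variable R : nzRingType.

Section Coefficients.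
Variable X : eqType.
Implicit Types (S : set X) (t : seq (X * R)).

Definition supported S t := forall p, p \in t -> S p.1.

Definition coef t (y : X) : R := \sum_(p <- t | p.1 == y) p.2.

Lemma supported_cat S t1 t2 :
  supported S t1 -> supported S t2 -> supported S (t1 ++ t2).
Proof. by move=> h1 h2 p; rewrite mem_cat => /orP[/h1|/h2]. Qed.

Lemma coef_cat t1 t2 y : coef (t1 ++ t2) y = coef t1 y + coef t2 y.
Proof. by rewrite /coef big_cat. Qed.

Lemma coef_notin t y : y \notin map fst t -> coef t y = 0.
Proof.
by move=> ny; rewrite /coef big1_seq // => p /andP[/eqP py /(map_f fst)]; rewrite py (negbTE ny).
Qed.

Lemma coef_map (Z : eqType) (s : seq Z) (g : Z -> X) (c : Z -> R) z :
  uniq s -> {in s &, injective g} -> z \in s ->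
  coef [seq (g z', c z') | z' <- s] (g z) = c z.
Proof.
move=> us ig zs; rewrite /coef big_map /= -big_filter.
rewrite (@eq_in_filter _ _ (pred1 z)) ?filter_pred1_uniq ?big_seq1 // => z' z's /=.
by apply/eqP/eqP => [/(ig _ _ z's zs)|->].
Qed.

Lemma sum_coef (W : lmodType R) (G : X -> W) t (u : seq X) :
  uniq u -> {subset map fst t <= u} ->
  \sum_(p <- t) p.2 *: G p.1 = \sum_(y <- u) coef t y *: G y.
Proof.
move=> uu tu; transitivity (\sum_(p <- t) \sum_(y <- u | p.1 == y) p.2 *: G p.1).
  apply: eq_big_seq => p pt; rewrite -big_filter.
  rewrite (@eq_filter _ _ (pred1 p.1)) => [|y]; last by rewrite /= eq_sym.
  by rewrite filter_pred1_uniq ?big_seq1 ?tu ?map_f.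
rewrite (exchange_big_dep xpredT) //=; apply: eq_bigr => y _.
by rewrite scaler_suml; apply: eq_bigr => p /eqP->.
Qed.

End Coefficients.

Section Vectors.
Variable V : lmodType R.
Implicit Types (S : set V) (t : seq (V * R)).

Definition lincomb t : V := \sum_(p <- t) p.2 *: p.1.

Definition lin_span S (v : V) := exists2 t, supported S t & v = lincomb t.

Definition spanning S := forall v, lin_span S v.

Definition independent S :=
  forall (s : seq V) (c : V -> R), uniq s -> (forall e, e \in s -> S e) ->
    \sum_(e <- s) c e *: e = 0 -> forall e, e \in s -> c e = 0.

Lemma lincomb_cat t1 t2 : lincomb (t1 ++ t2) = lincomb t1 + lincomb t2.
Proof. by rewrite /lincomb big_cat. Qed.

Lemma lincomb_scale a t : lincomb [seq (p.1, a * p.2) | p <- t] = a *: lincomb t.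
Proof. by rewrite /lincomb big_map scaler_sumr; apply: eq_bigr => p _; rewrite scalerA. Qed.

Lemma lincomb_coef t (u : seq V) :
  uniq u -> {subset map fst t <= u} -> lincomb t = \sum_(y <- u) coef t y *: y.
Proof. exact: sum_coef id t u. Qed.

Lemma lin_span0 S : lin_span S 0.
Proof. by exists [::]; rewrite // /lincomb big_nil. Qed.

Lemma lin_span_mem S e : S e -> lin_span S e.
Proof.
move=> Se; exists [:: (e, 1)]; last by rewrite /lincomb big_seq1 scale1r.
by move=> p; rewrite mem_seq1 => /eqP->.
Qed.

Lemma lin_spanZD S a u v : lin_span S u -> lin_span S v -> lin_span S (a *: u + v).
Proof.
move=> [t1 St1 ->] [t2 St2 ->]; exists ([seq (p.1, a * p.2) | p <- t1] ++ t2).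
  by apply: supported_cat => // _ /mapP[p /St1 ? ->].
by rewrite lincomb_cat lincomb_scale.
Qed.

Lemma lin_spanD S u v : lin_span S u -> lin_span S v -> lin_span S (u + v).
Proof. by move=> su sv; rewrite -[u]scale1r; apply: lin_spanZD. Qed.

Lemma lin_spanZ S a v : lin_span S v -> lin_span S (a *: v).
Proof. by move=> sv; rewrite -[_ *: v]addr0; apply/lin_spanZD/lin_span0. Qed.

Lemma lin_span_sum S (I : eqType) (r : seq I) (G : I -> V) :
  (forall i, i \in r -> lin_span S (G i)) -> lin_span S (\sum_(i <- r) G i).
Proof.
elim: r => [|i r IHr] sG; first by rewrite big_nil; apply: lin_span0.
rewrite big_cons; apply: lin_spanD; first by apply: sG; rewrite mem_head.
by apply: IHr => j jr; apply: sG; rewrite in_cons jr orbT.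
Qed.

Lemma independent_sub S S' : S' `<=` S -> independent S -> independent S'.
Proof. by move=> sS'S iS s c us sS'; apply: iS => // e /sS'/sS'S. Qed.

Lemma linear0P (W : lmodType R) (L : V -> W) : linear L -> L 0 = 0.
Proof.
move=> L_lin; have L00 := L_lin 1 0 0; rewrite !scale1r addr0 in L00.
by apply: (@addrI _ (L 0)); rewrite addr0 -L00.
Qed.

Lemma linear_comp (U W : lmodType R) (L1 : V -> U) (L2 : U -> W) :
  linear L1 -> linear L2 -> linear (L2 \o L1).
Proof. by move=> L1_lin L2_lin a u v; rewrite /= L1_lin L2_lin. Qed.

Lemma linear_sumZ (W : lmodType R) (L : V -> W) (I : Type) (r : seq I)
    (c : I -> R) (F : I -> V) : linear L ->
  L (\sum_(i <- r) c i *: F i) = \sum_(i <- r) c i *: L (F i).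
Proof.
move=> L_lin; elim: r => [|i r IHr]; first by rewrite !big_nil linear0P.
by rewrite !big_cons L_lin IHr.
Qed.

Lemma spanning_linear_eq (W : lmodType R) S (L1 L2 : V -> W) :
  spanning S -> linear L1 -> linear L2 -> (forall e, S e -> L1 e = L2 e) -> L1 =1 L2.
Proof.
move=> S_span L1_lin L2_lin eL v; have [t St ->] := S_span v.
rewrite /lincomb !linear_sumZ //; apply: eq_big_seq => p /St Sp; by rewrite eL.
Qed.

Definition basis_set S := independent S /\ spanning S.

Section BasisExtension.
Variables (S : set V) (S_basis : basis_set S).

Let S_indep := proj1 S_basis.
Let rep v := s2val (cid2 (proj2 S_basis v)).
Let rep_supported v : supported S (rep v). Proof. exact: (s2valP (cid2 (proj2 S_basis v))). Qed.
Let rep_lincomb v : v = lincomb (rep v). Proof. exact: (s2valP' (cid2 (proj2 S_basis v))). Qed.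

Lemma coef_unique t1 t2 : supported S t1 -> supported S t2 ->
  lincomb t1 = lincomb t2 -> coef t1 =1 coef t2.
Proof.
move=> St1 St2 e12 e; pose u := undup (map fst (t1 ++ t2)).
have uu : uniq u by apply: undup_uniq.
have t1u : {subset map fst t1 <= u} by move=> y yt; rewrite mem_undup map_cat mem_cat yt.
have t2u : {subset map fst t2 <= u}.
  by move=> y yt; rewrite mem_undup map_cat mem_cat yt orbT.
have [eu|eu] := boolP (e \in u); last first.
  by rewrite !coef_notin //; apply: contra eu; [apply: t2u|apply: t1u].
have Su y : y \in u -> S y.
  by rewrite mem_undup => /mapP[p]; rewrite mem_cat => /orP[/St1|/St2] ? ->.
apply/eqP; rewrite -subr_eq0; apply/eqP.
move: S_indep => /(_ u (fun y => coef t1 y - coef t2 y) uu Su) -> //.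
under eq_bigr do rewrite scalerBl.
by rewrite sumrB -(lincomb_coef uu t1u) -(lincomb_coef uu t2u) e12 subrr.
Qed.

Definition basis_ext (W : lmodType R) (G : V -> W) (v : V) : W :=
  \sum_(p <- rep v) p.2 *: G p.1.

Lemma basis_ext_lincomb (W : lmodType R) (G : V -> W) t : supported S t ->
  basis_ext G (lincomb t) = \sum_(p <- t) p.2 *: G p.1.
Proof.
move=> St; rewrite /basis_ext; set r := rep _.
have ert : lincomb r = lincomb t by rewrite -rep_lincomb.
pose u := undup (map fst (r ++ t)); have uu : uniq u by apply: undup_uniq.
rewrite !(sum_coef G uu) => [|y|y]; last 2 first.
- by rewrite mem_undup map_cat mem_cat => ->; rewrite orbT.
- by rewrite mem_undup map_cat mem_cat => ->.
by apply: eq_bigr => y _; rewrite (coef_unique (@rep_supported (lincomb t)) St ert).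
Qed.

Lemma basis_ext_is_linear (W : lmodType R) (G : V -> W) : linear (basis_ext G).
Proof.
move=> a u v; rewrite [in LHS](rep_lincomb u) [in LHS](rep_lincomb v).
rewrite -lincomb_scale -lincomb_cat basis_ext_lincomb; last first.
  by apply: supported_cat => // _ /mapP[p /(@rep_supported u) ? ->].
by rewrite big_cat big_map scaler_sumr; congr (_ + _); apply: eq_bigr => p _; rewrite scalerA.
Qed.

HB.instance Definition _ (W : lmodType R) (G : V -> W) :=
  GRing.isLinear.Build R V W *:%R (basis_ext G) (basis_ext_is_linear G).

Lemma basis_extE (W : lmodType R) (G : V -> W) e : S e -> basis_ext G e = G e.
Proof.
move=> Se; have := basis_ext_lincomb G (t := [:: (e, 1)]).
by rewrite /lincomb !big_seq1 !scale1r; apply=> p; rewrite mem_seq1 => /eqP->.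
Qed.

End BasisExtension.
End Vectors.
End LinearCombinations.

Section SpanType.
Variables (R : nzRingType) (V : lmodType R) (S : set V).

Definition span_pred : pred V := fun v => `[< lin_span S v >].

Fact span_pred_submod_closed : submod_closed span_pred.
Proof.
split; first exact/asboolP/lin_span0.
by move=> a u v /asboolP su /asboolP sv; apply/asboolP/lin_spanZD.
Qed.

HB.instance Definition _ :=
  GRing.isSubmodClosed.Build R V span_pred span_pred_submod_closed.

Inductive span_type : predArgType := SpanType v of v \in span_pred.
Definition span_val w : V := let: SpanType v _ := w in v.
HB.instance Definition _ := [isSub of span_type for span_val].
HB.instance Definition _ := [Choice of span_type by <:].
HB.instance Definition _ := [SubChoice_isSubZmodule of span_type by <:].
HB.instance Definition _ := [SubZmodule_isSubLmodule of span_type by <:].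

Lemma val_span_sum (I : Type) (r : seq I) (F : I -> span_type) :
  val (\sum_(i <- r) F i) = \sum_(i <- r) val (F i).
Proof. by elim: r => [|i r IHr]; rewrite ?big_nil ?big_cons ?GRing.val0 // GRing.valD IHr. Qed.

Lemma span_type_mem (w : span_type) : lin_span S (val w).
Proof. by have := valP w; rewrite unfold_in => /asboolP. Qed.

Definition span_index := {e : V | `[< S e >]}.

Definition span_basis (i : span_index) : span_type :=
  SpanType (introT (asboolP _) (lin_span_mem (elimT (asboolP _) (valP i)))).

Lemma span_basis_is_basis : independent S -> is_basis span_basis.
Proof.
move=> S_indep; split.
  move=> w; have [t St ew] := span_type_mem w.
  pose u := undup (map fst t); have uu : uniq u by apply: undup_uniq.
  have tu : {subset map fst t <= u} by move=> e; rewrite mem_undup.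
  have Su e : e \in u -> `[< S e >].
    by rewrite mem_undup => /mapP[p /St Sp ->]; apply/asboolP.
  exists (pmap insub u), (fun i : span_index => coef t (val i)).
  apply: val_inj; rewrite /= val_span_sum ew (lincomb_coef uu tu).
  have hu : map val (pmap insub u : seq span_index) = u.
    rewrite (pmap_filter (@insubK _ _ _)) -[RHS]filter_predT.
    apply: eq_in_filter => e /Su /= Se.
    by rewrite (@insubT _ (fun e => `[< S e >]) span_index e Se).
  rewrite -[in LHS]hu big_map; apply: eq_bigr => i _; rewrite GRing.valZ; reflexivity.
move=> s c us sum0 i si.
pose c' (e : V) := if insub e is Some j then c j else 0.
have c'E (j : span_index) : c' (val j) = c j by rewrite /c' valK.
rewrite -c'E; apply: (S_indep (map val s) c') => //.
- by rewrite map_inj_uniq //; apply: val_inj.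
- by move=> e /mapP[j _ ->]; apply/asboolP; exact: (valP j).
- move/(congr1 val): sum0; rewrite /= val_span_sum => sum0.
  rewrite big_map -[RHS]sum0; apply: eq_bigr => j _; rewrite c'E GRing.valZ; reflexivity.
- exact: map_f.
Qed.

Definition span_part (e : V) : span_type := insubd 0 (if `[< S e >] then e else 0).

Lemma span_partE e : S e -> val (span_part e) = e.
Proof.
move=> Se; rewrite /span_part (asboolT Se) insubdK //.
by apply/asboolP/lin_span_mem.
Qed.

Lemma span_part_out e : ~ S e -> span_part e = 0.
Proof.
move=> nSe; rewrite /span_part (asboolF nSe); apply: val_inj.
by rewrite insubdK ?GRing.val0 // rpred0.
Qed.

Lemma span_part0 : span_part 0 = 0.
Proof.
apply: val_inj; rewrite /span_part; case: asboolP => _;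
  by rewrite insubdK ?GRing.val0 // rpred0.
Qed.

Lemma sum_span_part (w : span_type) t : supported S t -> val w = lincomb t ->
  \sum_(p <- t) p.2 *: span_part p.1 = w.
Proof.
move=> St ew; apply: val_inj; rewrite val_span_sum ew.
by apply: eq_big_seq => p /St Sp; rewrite GRing.valZ span_partE.
Qed.

Lemma span_type_free : independent S -> free_lmod span_type.
Proof. by move=> S_indep; exists _, span_basis; apply: span_basis_is_basis. Qed.

End SpanType.

(** * The normal form in bases adapted to [f] *)

Definition inv_on (U V : Type) (u0 : U) (f : U -> V) (A : set U) (v : V) : U :=
  if pselect ((f @` A) v) is left h then s2val (cid2 h) else u0.

Lemma inv_onK (U V : Type) (u0 : U) (f : U -> V) (A : set U) a :
  (forall a1 a2, A a1 -> A a2 -> f a1 = f a2 -> a1 = a2) -> A a -> inv_on u0 f A (f a) = a.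
Proof.
move=> f_inj Aa; rewrite /inv_on; case: pselect => [h|[]]; last by exists a.
by case: (cid2 h) => a' Aa' /= /f_inj; apply.
Qed.

Lemma inv_on_out (U V : Type) (u0 : U) (f : U -> V) (A : set U) v :
  ~ (f @` A) v -> inv_on u0 f A v = u0.
Proof. by rewrite /inv_on; case: pselect. Qed.

Section Triples.
Variables (R : nzRingType) (M N W : lmodType R).

Lemma linear_in1 : linear (fun u : M => (u, 0, 0) : M * N * W).
Proof. by move=> a u v; rewrite -[RHS]/(a *: u + v, a *: 0 + 0, a *: 0 + 0) !scaler0 !addr0. Qed.

Lemma linear_in2 : linear (fun u : N => (0, u, 0) : M * N * W).
Proof. by move=> a u v; rewrite -[RHS]/(a *: 0 + 0, a *: u + v, a *: 0 + 0) !scaler0 !addr0. Qed.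

Lemma linear_in3 : linear (fun u : W => (0, 0, u) : M * N * W).
Proof. by move=> a u v; rewrite -[RHS]/(a *: 0 + 0, a *: 0 + 0, a *: u + v) !scaler0 !addr0. Qed.

Lemma linear_sum3 (Z : lmodType R) (L1 : M -> Z) (L2 : N -> Z) (L3 : W -> Z) :
  linear L1 -> linear L2 -> linear L3 ->
  linear (fun y : (M * N * W)%type => L1 y.1.1 + L2 y.1.2 + L3 y.2).
Proof.
move=> L1_lin L2_lin L3_lin a [[u1 u2] u3] [[v1 v2] v3].
rewrite -[a *: _ + _]/(a *: u1 + v1, a *: u2 + v2, a *: u3 + v3) /=.
rewrite L1_lin L2_lin L3_lin !scalerDr [RHS]addrACA; congr (_ + _); exact: addrACA.
Qed.

End Triples.

Lemma basis_ext_span_type (R : nzRingType) (V V0 Z : lmodType R)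
    (S : set V) (S_basis : basis_set S) (S0 : set V0)
    (L : V0 -> V) (G : V -> Z) (H : span_type S0 -> Z) (y : span_type S0) :
  linear L -> linear H -> (forall e, S0 e -> S (L e)) ->
  (forall e, S0 e -> G (L e) = H (span_part S0 e)) ->
  basis_ext S_basis G (L (val y)) = H y.
Proof.
move=> L_lin H_lin LS GL; have [t St ey] := span_type_mem y.
rewrite ey -(sum_span_part St ey) /lincomb !linear_sumZ //; last first.
  exact: basis_ext_is_linear.
by apply: eq_big_seq => p /St S0p; rewrite basis_extE ?GL //; apply: LS.
Qed.

Section AdaptedBases.
Variables (R : nzRingType) (x : R) (P Q : lmodType R) (f : {linear P -> Q}) (g : P -> Q).
Variables (A B C : set P) (D : set Q).
Hypothesis T_basis : basis_set (A `|` B `|` C).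
Hypotheses (AB : forall e, A e -> ~ B e) (AC : forall e, A e -> ~ C e).
Hypothesis BC : forall e, B e -> ~ C e.
Hypotheses (f_B : forall e, B e -> f e = x *: g e) (f_C : forall e, C e -> f e = 0).
Hypothesis f_inj : forall a1 a2, A a1 -> A a2 -> f a1 = f a2 -> a1 = a2.
Hypothesis g_inj : forall b1 b2, B b1 -> B b2 -> g b1 = g b2 -> b1 = b2.
Hypothesis D'_basis : basis_set (f @` A `|` g @` B `|` D).
Hypothesis fg : forall a b, A a -> B b -> f a <> g b.
Hypotheses (fD : forall a, A a -> ~ D (f a)) (gD : forall b, B b -> ~ D (g b)).

Local Notation M := (span_type A).
Local Notation N := (span_type B).
Local Notation V := (span_type C).
Local Notation W := (span_type D).

Let T_A e : A e -> (A `|` B `|` C) e. Proof. by left; left. Qed.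
Let T_B e : B e -> (A `|` B `|` C) e. Proof. by left; right. Qed.
Let T_C e : C e -> (A `|` B `|` C) e. Proof. by right. Qed.
Let D'_A a : A a -> (f @` A `|` g @` B `|` D) (f a). Proof. by left; left; exists a. Qed.
Let D'_B b : B b -> (f @` A `|` g @` B `|` D) (g b). Proof. by left; right; exists b. Qed.
Let D'_D q : D q -> (f @` A `|` g @` B `|` D) q. Proof. by right. Qed.

Definition phi_part (e : P) : M * N * V := (span_part A e, span_part B e, span_part C e).

Definition psi_part (q : Q) : M * N * W :=
  (span_part A (inv_on 0 f A q), span_part B (inv_on 0 g B q), span_part D q).

Definition adapted_phi := basis_ext T_basis phi_part.

Definition adapted_psi := basis_ext D'_basis psi_part.

Definition adapted_xmul (n : N) : N :=
  basis_ext T_basis (fun e => x *: span_part B e) (val n).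

Lemma phi_part_A e : A e -> phi_part e = (span_part A e, 0, 0).
Proof. by move=> Ae; rewrite /phi_part (span_part_out (AB Ae)) (span_part_out (AC Ae)). Qed.

Lemma phi_part_B e : B e -> phi_part e = (0, span_part B e, 0).
Proof.
move=> Be; have nAe : ~ A e by move/AB.
by rewrite /phi_part (span_part_out nAe) (span_part_out (BC Be)).
Qed.

Lemma phi_part_C e : C e -> phi_part e = (0, 0, span_part C e).
Proof.
move=> Ce; have nAe : ~ A e by move/AC.
have nBe : ~ B e by move/BC.
by rewrite /phi_part (span_part_out nAe) (span_part_out nBe).
Qed.

Lemma psi_part_A a : A a -> psi_part (f a) = (span_part A a, 0, 0).
Proof.
move=> Aa; rewrite /psi_part inv_onK // inv_on_out.
  by rewrite span_part0 (span_part_out (fD Aa)).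
by case=> b Bb /esym; apply: fg.
Qed.

Lemma psi_part_B b : B b -> psi_part (g b) = (0, span_part B b, 0).
Proof.
move=> Bb; rewrite /psi_part inv_onK // inv_on_out.
  by rewrite span_part0 (span_part_out (gD Bb)).
by case=> a Aa; apply: fg.
Qed.

Lemma psi_part_D q : D q -> psi_part q = (0, 0, span_part D q).
Proof.
move=> Dq; rewrite /psi_part !inv_on_out ?span_part0 //.
- by case=> b Bb gbq; apply: (gD Bb); rewrite gbq.
- by case=> a Aa faq; apply: (fD Aa); rewrite faq.
Qed.

Lemma adapted_phi_bij : bijective adapted_phi.
Proof.
pose phi_inv (y : M * N * V) := val y.1.1 + val y.1.2 + val y.2.
have phi_inv_lin : linear phi_inv.
  by apply: linear_sum3 => a u v; rewrite GRing.valD GRing.valZ.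
exists phi_inv.
  apply: (spanning_linear_eq (L1 := phi_inv \o adapted_phi) (L2 := id) (proj2 T_basis)).
  - exact: linear_comp (basis_ext_is_linear _ _) phi_inv_lin.
  - by [].
  move=> e Te; rewrite /= /adapted_phi basis_extE //.
  case: Te => [[Ae|Be]|Ce].
  - by rewrite phi_part_A // /phi_inv span_partE // !GRing.val0 !addr0.
  - by rewrite phi_part_B // /phi_inv span_partE // !GRing.val0 addr0 add0r.
  - by rewrite phi_part_C // /phi_inv span_partE // !GRing.val0 !add0r.
move=> [[a b] c]; rewrite /phi_inv /adapted_phi !linearD /=.
rewrite (@basis_ext_span_type _ _ _ _ _ T_basis _ id _ (fun u => (u, 0, 0)) a) //;
  [|exact: linear_in1|exact: phi_part_A].
rewrite (@basis_ext_span_type _ _ _ _ _ T_basis _ id _ (fun u => (0, u, 0)) b) //;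
  [|exact: linear_in2|exact: phi_part_B].
rewrite (@basis_ext_span_type _ _ _ _ _ T_basis _ id _ (fun u => (0, 0, u)) c) //;
  [|exact: linear_in3|exact: phi_part_C].
by rewrite -[LHS]/(a + 0 + 0, 0 + b + 0, 0 + 0 + c) !addr0 !add0r.
Qed.

Lemma adapted_psi_bij : bijective adapted_psi.
Proof.
pose psi_inv (y : M * N * W) := f (val y.1.1) + basis_ext T_basis g (val y.1.2) + val y.2.
have psi_inv_lin : linear psi_inv.
  apply: (linear_sum3 (L1 := fun u => f (val u)) (L2 := fun u => basis_ext T_basis g (val u)));
    move=> a u v; rewrite GRing.valD GRing.valZ //; [exact: linearP|exact: basis_ext_is_linear].
exists psi_inv.
  apply: (spanning_linear_eq (L1 := psi_inv \o adapted_psi) (L2 := id) (proj2 D'_basis)).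
  - exact: linear_comp (basis_ext_is_linear _ _) psi_inv_lin.
  - by [].
  move=> q Dq; rewrite /= /adapted_psi basis_extE //.
  case: Dq => [[[a Aa <-]|[b Bb <-]]|Dq].
  - by rewrite psi_part_A // /psi_inv span_partE // !GRing.val0 linear0 !addr0.
  - rewrite psi_part_B // /psi_inv span_partE // !GRing.val0 linear0 addr0 add0r.
    by rewrite basis_extE //; apply: T_B.
  - by rewrite psi_part_D // /psi_inv span_partE // !GRing.val0 !linear0 !add0r.
move=> [[a b] w]; rewrite /psi_inv /adapted_psi !linearD /=.
rewrite (@basis_ext_span_type _ _ _ _ _ D'_basis _ f _ (fun u => (u, 0, 0)) a) //;
  [|exact: linearP|exact: linear_in1|exact: psi_part_A].
rewrite (@basis_ext_span_type _ _ _ _ _ D'_basis _ (basis_ext T_basis g) _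
    (fun u => (0, u, 0)) b) //;
  [|exact: basis_ext_is_linear|exact: linear_in2|..]; last first.
- by move=> e Be; rewrite basis_extE ?psi_part_B //; apply: T_B.
- by move=> e Be; rewrite basis_extE //; [apply: D'_B|apply: T_B].
rewrite (@basis_ext_span_type _ _ _ _ _ D'_basis _ id _ (fun u => (0, 0, u)) w) //;
  [|exact: linear_in3|exact: psi_part_D].
by rewrite -[LHS]/(a + 0 + 0, 0 + b + 0, 0 + 0 + w) !addr0 !add0r.
Qed.

Lemma adapted_xmul_coord : rmul_coord (@span_basis _ _ B) x adapted_xmul.
Proof.
move=> s c; rewrite /adapted_xmul val_span_sum.
under eq_bigr do rewrite GRing.valZ.
rewrite linear_sumZ; last exact: basis_ext_is_linear.
apply: eq_bigr => i _; rewrite basis_extE; last by apply/T_B/asboolP/(valP i).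
rewrite scalerA; congr (_ *: _); apply: val_inj.
by rewrite span_partE //; apply/asboolP/(valP i).
Qed.

Lemma adapted_psi_f p :
  adapted_psi (f p) = ((adapted_phi p).1.1, adapted_xmul (adapted_phi p).1.2, 0).
Proof.
have xmul_lin : linear adapted_xmul.
  by move=> a u v; rewrite /adapted_xmul GRing.valD GRing.valZ linearP.
apply: (spanning_linear_eq (L1 := adapted_psi \o f)
  (L2 := fun p => ((adapted_phi p).1.1, adapted_xmul (adapted_phi p).1.2, 0))
  (proj2 T_basis)) => [||e Te].
- exact: linear_comp (linearP f) (basis_ext_is_linear _ _).
- move=> a u v; rewrite /adapted_phi linearP /=.
  by rewrite xmul_lin -[RHS]/(_, _, a *: 0 + 0) scaler0 addr0.
rewrite /= /adapted_phi [basis_ext T_basis _ _]basis_extE // /adapted_psi.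
have xmul0 : adapted_xmul 0 = 0 by rewrite /adapted_xmul GRing.val0 linear0.
case: Te => [[Ae|Be]|Ce].
- rewrite basis_extE; last exact: D'_A.
  by rewrite psi_part_A // phi_part_A //= xmul0.
- rewrite f_B // linearZ [in LHS]/= basis_extE; last exact: D'_B.
  rewrite psi_part_B // phi_part_B //= /adapted_xmul basis_extE ?span_partE //; last exact: T_B.
  by rewrite -[LHS]/(x *: 0, x *: span_part B e, x *: 0) !scaler0.
- by rewrite f_C // linear0 phi_part_C //= xmul0.
Qed.

Lemma adapted_bases_normal_form : normal_form (@free_lmod R) x f.
Proof.
have B_indep : independent B by apply: independent_sub (proj1 T_basis) => e /T_B.
exists M, N, V, W; split.
  split; apply: span_type_free => //.
  - by apply: independent_sub (proj1 T_basis) => e /T_A.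
  - by apply: independent_sub (proj1 T_basis) => e /T_C.
  - by apply: independent_sub (proj1 D'_basis) => q /D'_D.
exists adapted_phi, adapted_psi; split.
  by split; [exact: basis_ext_is_linear|exact: adapted_phi_bij|
             exact: basis_ext_is_linear|exact: adapted_psi_bij].
exists (span_index B), (@span_basis _ _ B), adapted_xmul; split.
- exact: span_basis_is_basis.
- exact: adapted_xmul_coord.
- exact: adapted_psi_f.
Qed.

End AdaptedBases.

(** * Modules over a local ring with principal square-zero maximal ideal *)

Section LocalRing.
Variables (R : nzRingType) (m : set R) (x : R).
Hypotheses (m_local : local_with_max m) (m_sq0 : forall a b, m a -> m b -> a * b = 0).
Hypotheses (m_xR : forall a, m a <-> exists r, a = x * r).
Hypotheses (m_Rx : forall a, m a <-> exists r, a = r * x).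
Hypothesis x_neq0 : x <> 0.

Lemma m_left_ideal : left_ideal m. Proof. by case: m_local => -[]. Qed.

Lemma m0 : m 0. Proof. by case: m_left_ideal. Qed.

Lemma mD a b : m a -> m b -> m (a + b). Proof. by case: m_left_ideal => _ + _; apply. Qed.

Lemma m_mull r a : m a -> m (r * a). Proof. by case: m_left_ideal => _ _; apply. Qed.

Lemma m_notin1 : ~ m 1. Proof. by case: m_local => -[]. Qed.

Lemma m_x : m x. Proof. by apply/m_xR; exists 1; rewrite mulr1. Qed.

Lemma m_mulr a r : m a -> m (a * r).
Proof. by move=> /m_xR[r' ->]; apply/m_xR; exists (r' * r); rewrite mulrA. Qed.

Lemma mN a : m a -> m (- a). Proof. by rewrite -mulN1r; apply: m_mull. Qed.

Lemma mB a b : m a -> m b -> m (a - b). Proof. by move=> ma /mN; apply: mD. Qed.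

Lemma m_sum (I : Type) (r : seq I) (G : I -> R) :
  (forall i, m (G i)) -> m (\sum_(i <- r) G i).
Proof. by move=> mG; elim: r => [|i r IHr]; rewrite ?big_nil ?big_cons; [apply: m0|apply: mD]. Qed.

Lemma mulx_m a : m a -> x * a = 0. Proof. exact: m_sq0 m_x. Qed.

Definition divlx (a : R) : R :=
  if pselect (exists r, a = x * r) is left h then sval (cid h) else 0.

Lemma divlxK a : m a -> x * divlx a = a.
Proof.
rewrite /divlx => /m_xR ma; case: pselect => [h|//].
by case: (cid h).
Qed.

Definition divrx (a : R) : R :=
  if pselect (exists r, a = r * x) is left h then sval (cid h) else 0.

Lemma divrxK a : m a -> divrx a * x = a.
Proof.
rewrite /divrx => /m_Rx ma; case: pselect => [h|//].
by case: (cid h).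
Qed.

Lemma notm_left_inv a : ~ m a -> exists b, b * a = 1.
Proof.
move=> nma; pose J z := exists r y, m y /\ z = r * a + y.
have J_ideal : left_ideal J.
  split.
  - by exists 0, 0; rewrite mul0r addr0; split=> //; apply: m0.
  - move=> _ _ [r1 [y1 [my1 ->]]] [r2 [y2 [my2 ->]]]; exists (r1 + r2), (y1 + y2).
    by rewrite mulrDl addrACA; split=> //; apply: mD.
  - move=> r _ [r1 [y1 [my1 ->]]]; exists (r * r1), (r * y1).
    by rewrite mulrDr mulrA; split=> //; apply: m_mull.
have [[r [y [my e1]]]|nJ1] := pselect (J 1).
  (* [r a = 1 - y] is inverted by [1 + y], since [y ^+ 2 = 0] *)
  exists ((1 + y) * r); rewrite -mulrA (_ : r * a = 1 - y); last by rewrite e1 addrK.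
  by rewrite mulrBr mulr1 mulrDl mul1r m_sq0 // addr0 addrK.
case: m_local => -[_ _ m_max] _; case: nma; apply: (m_max J J_ideal nJ1).
  by move=> u mu; exists 0, u; rewrite mul0r add0r.
by exists 1, 0; rewrite mul1r addr0; split=> //; apply: m0.
Qed.

Lemma notm_unit a : ~ m a -> exists b, b * a = 1 /\ a * b = 1.
Proof.
move=> nma; have [b ba1] := notm_left_inv nma.
have nmb : ~ m b by move=> mb; apply: m_notin1; rewrite -ba1; apply: m_mulr.
have [c cb1] := notm_left_inv nmb.
have ac : a = c by rewrite -[c]mulr1 -ba1 mulrA cb1 mul1r.
by exists b; rewrite {2}ac.
Qed.

Lemma m_of_mulx_eq0 c : c * x = 0 -> m c.
Proof.
move=> cx0; apply: contrapT => /notm_unit[b [bc1 _]]; apply: x_neq0.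
by rewrite -[x]mul1r -bc1 -mulrA cx0 mulr0.
Qed.

Lemma m_of_xmul_eq0 c : x * c = 0 -> m c.
Proof.
move=> xc0; apply: contrapT => /notm_unit[b [_ cb1]]; apply: x_neq0.
by rewrite -[x]mulr1 -cb1 mulrA xc0 mul0r.
Qed.

Section ModuloX.
Variable P : lmodType R.

Definition x_dvd (v : P) := exists w, v = x *: w.

Lemma x_dvd0 : x_dvd 0. Proof. by exists 0; rewrite scaler0. Qed.

Lemma x_dvdD u v : x_dvd u -> x_dvd v -> x_dvd (u + v).
Proof. by move=> [a ->] [b ->]; exists (a + b); rewrite scalerDr. Qed.

Lemma m_scale_x_dvd c (v : P) : m c -> x_dvd (c *: v).
Proof. by move=> mc; exists (divlx c *: v); rewrite scalerA divlxK. Qed.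

Lemma x_dvdZ r v : x_dvd v -> x_dvd (r *: v).
Proof. by move=> [w ->]; rewrite scalerA; apply/m_scale_x_dvd/m_mull/m_x. Qed.

Lemma x_dvdB u v : x_dvd u -> x_dvd v -> x_dvd (u - v).
Proof. by move=> du dv; apply: x_dvdD => //; rewrite -scaleN1r; apply: x_dvdZ. Qed.

Definition x_torsion_free := forall v : P, x *: v = 0 -> x_dvd v.

Lemma free_x_torsion_free : free_lmod P -> x_torsion_free.
Proof.
move=> [I [b [b_span b_indep]]] v xv0; have [s [c ev]] := b_span v; subst v.
pose t := [seq (i, c i) | i <- s]; pose u := undup s.
have uu : uniq u by apply: undup_uniq.
have tu : {subset map fst t <= u} by move=> i; rewrite -map_comp map_id mem_undup.
have es : \sum_(i <- s) c i *: b i = \sum_(i <- u) coef t i *: b i.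
  by rewrite -(sum_coef b uu tu) big_map.
rewrite es in xv0 *.
have m_coef i : i \in u -> m (coef t i).
  move=> iu; apply: m_of_xmul_eq0; apply: (b_indep u (fun j => x * coef t j) uu _ i iu).
  by rewrite -[RHS]xv0 scaler_sumr; apply: eq_bigr => j _; rewrite scalerA.
exists (\sum_(i <- u) divlx (coef t i) *: b i); rewrite scaler_sumr.
by apply: eq_big_seq => i iu; rewrite scalerA divlxK //; apply: m_coef.
Qed.

Section Families.
Variables (X : eqType) (F : X -> P).

(* The image of [F] on [S] in [P / xP] is linearly independent over [R / m]. *)
Definition indep_mod (S : set X) :=
  forall (s : seq X) (c : X -> R), uniq s -> (forall e, e \in s -> S e) ->
    x_dvd (\sum_(e <- s) c e *: F e) -> forall e, e \in s -> m (c e).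

Definition span_mod (S : set X) (v : P) :=
  exists2 t : seq (X * R), supported S t &
    exists w, v = \sum_(p <- t) p.2 *: F p.1 + x *: w.

Lemma indep_mod_coef S t : indep_mod S -> supported S t ->
  x_dvd (\sum_(p <- t) p.2 *: F p.1) -> forall y, m (coef t y).
Proof.
move=> S_indep St dt y; pose u := undup (map fst t).
have tu : {subset map fst t <= u} by move=> e; rewrite mem_undup.
have [yu|yu] := boolP (y \in u); last first.
  by rewrite coef_notin; [apply: m0|exact: (contra (@tu y) yu)].
apply: S_indep (undup_uniq _) _ _ _ yu; last by rewrite -(sum_coef F (undup_uniq _) tu).
by move=> e; rewrite mem_undup => /mapP[p /St ? ->].
Qed.

Lemma indep_mod_notdvd S y : indep_mod S -> S y -> ~ x_dvd (F y).
Proof.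
move=> S_indep Sy dy; apply: m_notin1; apply: (S_indep [:: y] (fun=> 1)) => //.
- by move=> e; rewrite mem_seq1 => /eqP->.
- by rewrite big_seq1 scale1r.
- exact: mem_head.
Qed.

Lemma indep_mod_inj S y1 y2 : indep_mod S -> S y1 -> S y2 -> F y1 = F y2 -> y1 = y2.
Proof.
move=> S_indep Sy1 Sy2 e12; apply: contrapT => /eqP n12; apply: m_notin1.
have := S_indep [:: y1; y2] (fun y => if y == y1 then 1 else -1).
move=> /(_ _ _ _ y1 (mem_head _ _)); rewrite eqxx; apply.
- by rewrite /= inE andbT.
- by move=> y; rewrite !inE => /orP[] /eqP->.
- by rewrite big_cons big_seq1 eqxx eq_sym (negbTE n12) scale1r scaleN1r e12 subrr; apply: x_dvd0.
Qed.

Lemma span_mod_mem S y : S y -> span_mod S (F y).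
Proof.
move=> Sy; exists [:: (y, 1)]; first by move=> p; rewrite mem_seq1 => /eqP->.
by exists 0; rewrite big_seq1 scale1r scaler0 addr0.
Qed.

Lemma span_modZD S a u v : span_mod S u -> span_mod S v -> span_mod S (a *: u + v).
Proof.
move=> [t St [w ->]] [t' St' [w' ->]].
exists ([seq (p.1, a * p.2) | p <- t] ++ t').
  by apply: supported_cat => // _ /mapP[p /St ? ->].
exists (divlx (a * x) *: w + w').
have axw : a *: (x *: w) = x *: (divlx (a * x) *: w).
  by rewrite !scalerA divlxK //; apply/m_mull/m_x.
rewrite scalerDr axw big_cat big_map /= scalerDr scaler_sumr addrACA.
by congr (_ + _); congr (_ + _); apply: eq_bigr => p _; rewrite scalerA.
Qed.

Lemma indep_mod_add S y : indep_mod S -> ~ span_mod S (F y) -> indep_mod (S `|` [set y]).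
Proof.
move=> S_indep nspan s c us sS ds.
have [ys|ys] := boolP (y \in s); last first.
  apply: S_indep => // e es; case: (sS e es) => // ey.
  by move: ys; rewrite -ey es.
pose s' := [seq e <- s | e != y].
have s'S e : e \in s' -> S e.
  by rewrite mem_filter => /andP[ney /sS[//|/eqP]]; rewrite (negbTE ney).
have sum_s : \sum_(e <- s) c e *: F e = c y *: F y + \sum_(e <- s') c e *: F e.
  by rewrite (bigD1_seq y) //= big_filter.
have [mcy|/notm_unit[b [bc1 _]]] := pselect (m (c y)).
  have ds' : x_dvd (\sum_(e <- s') c e *: F e).
    by move: (x_dvdB ds (m_scale_x_dvd (F y) mcy)); rewrite sum_s addrC addKr.
  move=> e es; have [->//|ney] := eqVneq e y.
  by apply: (S_indep s' c (filter_uniq _ us) s'S ds'); rewrite mem_filter ney.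
(* [c y] is a unit, so [F y] would lie in the span of [S] modulo [x] *)
case: nspan; case: ds => w ew.
exists [seq (e, - (b * c e)) | e <- s']; first by move=> _ /mapP[e /s'S ? ->].
exists (divlx (b * x) *: w).
rewrite scalerA divlxK; last by apply/m_mull/m_x.
rewrite -scalerA -ew sum_s scalerDr scalerA bc1 scale1r big_map scaler_sumr addrCA.
rewrite -big_split big1 ?addr0 // => e _ /=.
by rewrite scalerA scaleNr addNr.
Qed.

Lemma indep_mod_sub S S' : S' `<=` S -> indep_mod S -> indep_mod S'.
Proof. by move=> sS'S S_indep s c us sS'; apply: S_indep => // e /sS'/sS'S. Qed.

Lemma span_mod_sub S S' v : S `<=` S' -> span_mod S v -> span_mod S' v.
Proof. by move=> sSS' [t St dv]; exists t => // p /St/sSS'. Qed.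

Lemma span_mod0 S : span_mod S 0.
Proof. by exists [::] => //; exists 0; rewrite big_nil scaler0 addr0. Qed.

Lemma exists_maximal_indep_mod (L S0 : set X) : S0 `<=` L -> indep_mod S0 ->
  exists S, [/\ S0 `<=` S, S `<=` L, indep_mod S &
                forall y, L y -> span_mod S (F y)].
Proof.
move=> S0L S0_indep.
pose good s := (forall e, e \in s -> L e) /\ (uniq s -> forall c : X -> R,
  x_dvd (\sum_(e <- s) c e *: F e) -> forall e, e \in s -> m (c e)).
have goodE S : finitely_good good S <-> S `<=` L /\ indep_mod S.
  split=> [gS|[SL S_indep] s sS]; last by split=> [e /sS/SL|us c]; [|apply: S_indep].
  split=> [e Se|s c us sS]; last by case: (gS s sS) => _; apply.
  by case: (gS [:: e]) => [e'|+ _]; [rewrite mem_seq1 => /eqP->|apply; rewrite mem_head].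
have [S [S0S /goodE[SL S_indep] S_max]] :=
  exists_maximal_finitely_good (proj2 (goodE S0) (conj S0L S0_indep)).
exists S; split=> // y Ly; apply: contrapT => nspan; apply: (nspan).
apply/span_mod_mem/S_max/goodE; split; first by move=> e [/SL//|->].
exact: indep_mod_add.
Qed.

End Families.

Lemma indep_mod_image (X : eqType) (F : X -> P) (S : set X) :
  indep_mod F S -> indep_mod id (F @` S).
Proof.
move=> S_indep s c us sS ds.
have [ys [Fys ysS]] : exists ys, map F ys = s /\ forall y, y \in ys -> S y.
  elim: s {us ds} sS => [|q s IHs] sS; first by exists [::].
  have [y Sy Fy] := sS q (mem_head _ _).
  have [|ys [Fys ysS]] := IHs; first by move=> e es; apply: sS; rewrite in_cons es orbT.
  exists (y :: ys); split; first by rewrite /= Fy Fys.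
  by move=> z; rewrite in_cons => /orP[/eqP->|/ysS].
move=> e; rewrite -Fys => /mapP[y yys ->].
apply: (S_indep ys (fun y => c (F y))) => //.
- by move: us; rewrite -Fys => /map_uniq.
- by move: ds; rewrite -Fys big_map.
Qed.

Lemma span_mod_of_lin_span (S S' : set P) v :
  (forall e, S' e -> span_mod id S e) -> lin_span S' v -> span_mod id S v.
Proof.
move=> S'S [t St ->]; elim: t St => [|p t IHt] St.
  by rewrite /lincomb big_nil; apply: span_mod0.
rewrite /lincomb big_cons; apply: span_modZD; first by apply/S'S/St; rewrite mem_head.
by apply: IHt => q qt; apply: St; rewrite in_cons qt orbT.
Qed.

Lemma basis_of_indep_mod (S : set P) : x_torsion_free -> indep_mod id S ->
  (forall v, span_mod id S v) -> basis_set S.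
Proof.
move=> tf S_indep S_span; split.
  move=> s c us sS sum0 e es.
  have mc e' : e' \in s -> m (c e').
    by apply: (S_indep s c us sS); rewrite sum0; apply: x_dvd0.
  have md e' : e' \in s -> m (divlx (c e')).
    move=> e's; apply: (S_indep s (fun e => divlx (c e)) us sS _ e' e's).
    apply: tf; rewrite -[RHS]sum0 scaler_sumr.
    by apply: eq_big_seq => e'' e''s; rewrite scalerA divlxK //; apply: mc.
  by rewrite -(divlxK (mc e es)) mulx_m //; apply: md.
move=> v; have [t St [w ->]] := S_span v; have [t' St' [w' ->]] := S_span w.
exists (t ++ [seq (p.1, x * p.2) | p <- t']).
  by apply: supported_cat => // _ /mapP[p /St' ? ->].
by rewrite lincomb_cat lincomb_scale scalerDr scalerA (mulx_m m_x) scale0r addr0.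
Qed.

End ModuloX.

Section Construction.
Variables (P Q : lmodType R) (f : {linear P -> Q}).

Definition fdivx (p : P) : Q :=
  if pselect (x_dvd (f p)) is left h then sval (cid h) else 0.

Lemma fdivxP p : x_dvd (f p) -> f p = x *: fdivx p.
Proof. by rewrite /fdivx; case: pselect => // h _; case: (cid h). Qed.

(* [inl a] stands for [f a] and [inr b] for [fdivx b], making [f A] and [fdivx B] one family. *)
Definition image_family (y : P + P) : Q :=
  match y with inl a => f a | inr b => fdivx b end.

Definition sum_set (A B : set P) : set (P + P) :=
  fun y => match y with inl a => A a | inr b => B b end.

Definition adapted_families (A B : set P) :=
  [/\ indep_mod image_family (sum_set A B), forall b, B b -> x_dvd (f b),
      forall p, span_mod image_family (sum_set A set0) (f p) &
      forall p, x_dvd (f p) -> span_mod image_family (sum_set A B) (fdivx p)].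

Lemma exists_adapted_families : exists A B, adapted_families A B.
Proof.
have set0_indep : indep_mod image_family set0 by move=> s c _ s0 _ e /s0.
have [T1 [_ T1L T1_indep T1_span]] :=
  exists_maximal_indep_mod (sub0set (sum_set setT set0)) set0_indep.
pose A a := T1 (inl a).
have T1A : T1 `<=` sum_set A set0 by case=> [a|b] /[dup] /T1L.
have A_indep : indep_mod image_family (sum_set A set0).
  by apply: indep_mod_sub T1_indep => -[a|b].
have A_L : sum_set A set0 `<=` sum_set A (fun b => x_dvd (f b)) by case.
have [T2 [T1T2 T2L T2_indep T2_span]] := exists_maximal_indep_mod A_L A_indep.
exists A, (fun b => T2 (inr b)); split.
- by apply: indep_mod_sub T2_indep => -[a /(T1T2 (inl a))|b].
- by move=> b /T2L.
- by move=> p; apply: span_mod_sub T1A _; apply: (T1_span (inl p)).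
- move=> p dp; apply: span_mod_sub (T2_span (inr p) dp).
  by case=> [a /T2L|b].
Qed.

Section AdaptedFamilies.
Variables (A B : set P).
Hypothesis AB_adapted : adapted_families A B.
Hypothesis Q_tf : x_torsion_free Q.

Let AB_indep : indep_mod image_family (sum_set A B). Proof. by case: AB_adapted. Qed.
Let B_dvd b : B b -> x_dvd (f b). Proof. by case: AB_adapted => _ /(_ b). Qed.
Let f_span p : span_mod image_family (sum_set A set0) (f p).
Proof. by case: AB_adapted => _ _ /(_ p). Qed.
Let fdivx_span p : x_dvd (f p) -> span_mod image_family (sum_set A B) (fdivx p).
Proof. by case: AB_adapted => _ _ _ /(_ p). Qed.

Lemma B_fdivx b : B b -> f b = x *: fdivx b. Proof. by move/B_dvd/fdivxP. Qed.

Lemma f_injA a1 a2 : A a1 -> A a2 -> f a1 = f a2 -> a1 = a2.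
Proof. by move=> A1 A2 /(indep_mod_inj (y1 := inl a1) (y2 := inl a2) AB_indep A1 A2) []. Qed.

Lemma fdivx_injB b1 b2 : B b1 -> B b2 -> fdivx b1 = fdivx b2 -> b1 = b2.
Proof. by move=> B1 B2 /(indep_mod_inj (y1 := inr b1) (y2 := inr b2) AB_indep B1 B2) []. Qed.

Lemma f_neq_fdivx a b : A a -> B b -> f a <> fdivx b.
Proof. by move=> Aa Bb /(indep_mod_inj (y1 := inl a) (y2 := inr b) AB_indep Aa Bb). Qed.

Lemma A_notdvd a : A a -> ~ x_dvd (f a).
Proof. exact: (indep_mod_notdvd (y := inl a) AB_indep). Qed.

Lemma A_disj_B e : A e -> ~ B e. Proof. by move=> /A_notdvd + /B_dvd. Qed.

Let idx e : P + P := if `[< A e >] then inl e else inr e.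

Let idx_inj : injective idx.
Proof. by move=> e1 e2; rewrite /idx; case: asboolP; case: asboolP => _ _ // -[]. Qed.

Let idx_in e : (A `|` B) e -> sum_set A B (idx e).
Proof. by rewrite /idx; case: asboolP => [//|nAe] [|]. Qed.

(* on [B] the image family is [fdivx], so [f] contributes an extra factor [x] *)
Let xcoef (c : P -> R) e := if `[< A e >] then c e else c e * x.

Let f_sum s c : (forall e, e \in s -> (A `|` B) e) ->
  f (\sum_(e <- s) c e *: e) = \sum_(e <- s) xcoef c e *: image_family (idx e).
Proof.
move=> sAB; rewrite linear_sum; apply: eq_big_seq => e es; rewrite linearZ /xcoef /idx.
case: asboolP => [//|nAe]; have [//|Be] := sAB e es.
by rewrite /= B_fdivx // scalerA.
Qed.

Let coef_idx s d (t : seq ((P + P) * R)) e : uniq s -> e \in s ->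
  coef ([seq (idx e', d e') | e' <- s] ++ t) (idx e) = d e + coef t (idx e).
Proof. by move=> us es; rewrite coef_cat coef_map //; move=> ? ? _ _ /idx_inj. Qed.

Let supported_idx s d (t : seq ((P + P) * R)) : (forall e, e \in s -> (A `|` B) e) ->
  supported (sum_set A set0) t -> supported (sum_set A B) ([seq (idx e, d e) | e <- s] ++ t).
Proof.
move=> sAB St; apply: supported_cat => [_ /mapP[e /sAB/idx_in ? ->]//|[[a|b] r] /St //].
Qed.

Lemma AB_indep_mod_A s c w : uniq s -> (forall e, e \in s -> (A `|` B) e) ->
  \sum_(e <- s) c e *: e = x *: w -> forall e, e \in s -> A e -> m (c e).
Proof.
move=> us sAB ew e es Ae; have [t1 St1 [w1 fw]] := f_span w.
pose t := [seq (idx e, xcoef c e) | e <- s] ++ [seq (q.1, - (x * q.2)) | q <- t1].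
have St : supported (sum_set A B) t by apply: supported_idx => // _ /mapP[q /St1 ? ->].
have sum_t0 : \sum_(q <- t) q.2 *: image_family q.1 = 0.
  rewrite big_cat !big_map -f_sum // ew linearZ fw /= scalerDr scalerA (mulx_m m_x).
  rewrite scale0r addr0 scaler_sumr -big_split big1 //= => q _.
  by rewrite scalerA scaleNr subrr.
have := indep_mod_coef AB_indep St (ex_intro _ 0 _) (idx e).
rewrite sum_t0 scaler0 coef_idx // /xcoef /idx asboolT // => /(_ erefl) mt.
have mt1 : m (coef [seq (q.1, - (x * q.2)) | q <- t1] (inl e)).
  rewrite /coef big_map big_mkcond; apply: m_sum => q /=.
  by case: ifP => _; [apply/mN/m_xR; exists q.2|exact: m0].
by have := mB mt mt1; rewrite addrK.
Qed.

Lemma AB_indep_mod : indep_mod id (A `|` B).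
Proof.
move=> s c us sAB [w ew] e es.
have [Ae|nAe] := pselect (A e); first exact: AB_indep_mod_A ew e es Ae.
have [t1 St1 [w1 fw]] := f_span w.
have mxcoef e' : e' \in s -> m (xcoef c e').
  move=> e's; rewrite /xcoef; case: asboolP => [Ae'|_]; last exact: m_mull _ m_x.
  exact: AB_indep_mod_A ew e' e's Ae'.
pose t := [seq (idx e, divlx (xcoef c e)) | e <- s] ++ [seq (q.1, - q.2) | q <- t1].
have St : supported (sum_set A B) t by apply: supported_idx => // _ /mapP[q /St1 ? ->].
(* dividing the image of the relation by [x] uses that [Q] is [x]-torsion free *)
have dt : x_dvd (\sum_(q <- t) q.2 *: image_family q.1).
  apply: Q_tf.
  rewrite big_cat !big_map scalerDr !scaler_sumr /=.
  rewrite (eq_big_seq (fun e' => xcoef c e' *: image_family (idx e'))); last first.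
    by move=> e' e's; rewrite scalerA divlxK //; apply: mxcoef.
  rewrite -f_sum // ew linearZ fw /= scalerDr scalerA (mulx_m m_x) scale0r addr0.
  rewrite scaler_sumr -big_split big1 //= => q _.
  by rewrite scaleNr scalerN subrr.
have := indep_mod_coef AB_indep St dt (idx e).
have t1_inl : inr e \notin map fst [seq (q.1, - q.2) | q <- t1].
  by apply/mapP=> -[_ /mapP[q /St1 + ->] /= eq]; rewrite -eq.
rewrite coef_idx // /idx /xcoef asboolF // coef_notin // addr0 => mdiv.
by apply: m_of_mulx_eq0; rewrite -(divlxK (m_mull (c e) m_x)) mulx_m.
Qed.

Lemma span_AB_ker p : lin_span (A `|` B `|` (fun e => f e = 0)) p.
Proof.
pose U := A `|` B `|` (fun e => f e = 0).
pose sum_val (y : P + P) := match y with inl e => e | inr e => e end.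
have U_sum (t : seq ((P + P) * R)) (d : (P + P) * R -> R) : supported (sum_set A B) t ->
    lin_span U (\sum_(q <- t) d q *: sum_val q.1).
  move=> St; apply: lin_span_sum => -[[a|b] r] /St /= Sq; apply/lin_spanZ/lin_span_mem.
  - by left; left.
  - by left; right.
have [t1 St1 [w1 fw]] := f_span p.
pose a := \sum_(q <- t1) q.2 *: sum_val q.1.
have fa : f a = \sum_(q <- t1) q.2 *: image_family q.1.
  by rewrite linear_sum; apply: eq_big_seq => -[[a'|b] r] /St1 // _; rewrite linearZ.
have dp1 : x_dvd (f (p - a)) by exists w1; rewrite linearB fw fa addrC addKr.
have [t2 St2 [w2 fw2]] := fdivx_span dp1.
(* on [B], [x * r = divrx (x * r) * x] moves the factor [x] onto [fdivx] *)
pose xc (q : (P + P) * R) := if q.1 is inl _ then x * q.2 else divrx (x * q.2).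
pose b := \sum_(q <- t2) xc q *: sum_val q.1.
have fb : f b = f (p - a).
  rewrite (fdivxP dp1) fw2 scalerDr scalerA (mulx_m m_x) scale0r addr0 linear_sum.
  rewrite scaler_sumr; apply: eq_big_seq => -[[a'|b'] r] /St2 /= Sq; rewrite linearZ scalerA //.
  by rewrite /= B_fdivx // scalerA divrxK //; apply/m_xR; exists r.
have -> : p = a + b + (p - (a + b)) by rewrite addrC subrK.
apply: lin_spanD; first apply: lin_spanD.
- by apply: U_sum => -[[a'|b'] r] /St1.
- exact: U_sum.
- by apply: lin_span_mem; right; rewrite opprD addrA linearB fb subrr.
Qed.

End AdaptedFamilies.

Hypotheses (P_free : free_lmod P) (Q_free : free_lmod Q).

Theorem free_normal_form : normal_form (@free_lmod R) x f.
Proof.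
have [A [B AB_adapted]] := exists_adapted_families.
have [AB_indep _ _ _] := AB_adapted.
have Q_tf := free_x_torsion_free Q_free.
pose U := A `|` B `|` (fun e => f e = 0).
have [T [ABT TU T_indep T_span]] := exists_maximal_indep_mod (F := id) (L := U)
  (subsetUl _) (AB_indep_mod AB_adapted Q_tf).
have T_basis : basis_set T.
  apply: basis_of_indep_mod (free_x_torsion_free P_free) T_indep _ => v.
  exact: span_mod_of_lin_span T_span (span_AB_ker AB_adapted v).
pose C e := [/\ T e, ~ A e & ~ B e].
have TE : A `|` B `|` C = T.
  apply/seteqP; split=> [e [[Ae|Be]|[]//]|e Te]; [exact/ABT/subsetUl|exact/ABT/subsetUr|].
  by have [Ae|nAe] := pselect (A e); [left; left|have [Be|nBe] := pselect (B e);
    [left; right|right]].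
have [D [FD _ D_indep D_span]] := exists_maximal_indep_mod (F := id) (L := setT)
  (subsetT _) (indep_mod_image AB_indep).
have D_basis : basis_set D by apply: basis_of_indep_mod Q_tf D_indep (fun q => D_span q I).
pose D2 q := [/\ D q, ~ (f @` A) q & ~ (fdivx @` B) q].
have DE : f @` A `|` fdivx @` B `|` D2 = D.
  apply/seteqP; split=> [q [[[a Aa <-]|[b Bb <-]]|[]//]|q Dq].
  - by apply: FD; exists (inl a).
  - by apply: FD; exists (inr b).
  have [fAq|nfAq] := pselect ((f @` A) q); first by left; left.
  by have [gBq|ngBq] := pselect ((fdivx @` B) q); [left; right|right].
apply: (adapted_bases_normal_form (g := fdivx) (A := A) (B := B) (C := C) (D := D2));
  rewrite ?TE ?DE //.
- exact: A_disj_B AB_adapted.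
- by move=> e Ae [_ nAe].
- by move=> e Be [_ _ nBe].
- exact: B_fdivx AB_adapted.
- by move=> e [/TU[[Ae|Be]|//] nAe nBe]; [case: nAe|case: nBe].
- exact: f_injA AB_adapted.
- exact: fdivx_injB AB_adapted.
- exact: f_neq_fdivx AB_adapted.
- by move=> a Aa [_ nfA _]; apply: nfA; exists a.
- by move=> b Bb [_ _ ngB]; apply: ngB; exists b.
Qed.

End Construction.
End LocalRing.

Lemma fingen_lmod_surj (R : nzRingType) (U V : lmodType R) (L : U -> V) :
  linear L -> (forall v, exists u, L u = v) -> fingen_lmod U -> fingen_lmod V.
Proof.
move=> L_lin L_surj [s s_span]; exists (map L s) => v.
have [u <-] := L_surj v; have [c ->] := s_span u.
rewrite size_map; exists c; rewrite linear_sumZ //; apply: eq_bigr => i _.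
by rewrite (nth_map 0).
Qed.

Lemma normal_form_fgfree (R : nzRingType) (x : R) (P Q : lmodType R) (f : P -> Q) :
  fingen_lmod P -> fingen_lmod Q ->
  normal_form (@free_lmod R) x f -> normal_form (@fgfree_lmod R) x f.
Proof.
move=> fgP fgQ [M [N [V [W [[fM fN fV fW] [phi [psi [[phi_lin phi_bij psi_lin psi_bij] nf]]]]]]]].
exists M, N, V, W; split; last by exists phi, psi.
have [phi_inv _ phiK] := phi_bij; have [psi_inv _ psiK] := psi_bij.
split; split=> //.
- apply: (fingen_lmod_surj (L := fun p => (phi p).1.1)) fgP => [a u v|v].
    by rewrite phi_lin.
  by exists (phi_inv (v, 0, 0)); rewrite phiK.
- apply: (fingen_lmod_surj (L := fun p => (phi p).1.2)) fgP => [a u v|v].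
    by rewrite phi_lin.
  by exists (phi_inv (0, v, 0)); rewrite phiK.
- apply: (fingen_lmod_surj (L := fun p => (phi p).2)) fgP => [a u v|v].
    by rewrite phi_lin.
  by exists (phi_inv (0, 0, v)); rewrite phiK.
- apply: (fingen_lmod_surj (L := fun q => (psi q).2)) fgQ => [a u v|v].
    by rewrite psi_lin.
  by exists (psi_inv (0, 0, v)); rewrite psiK.
Qed.

Theorem mainTheorem5 (R : nzRingType) (m : R -> Prop) (x : R) :
  local_with_max m ->
  (exists a, m a /\ a <> 0) ->
  (forall a b, m a -> m b -> a * b = 0) ->
  (forall y, m y -> y <> 0 ->
     forall a, (m a <-> exists r, a = r * y) /\ (m a <-> exists r, a = y * r)) ->
  m x -> x <> 0 ->
  (forall (P Q : lmodType R) (f : {linear P -> Q}),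
      free_lmod P -> free_lmod Q -> normal_form (@free_lmod R) x f) /\
  (forall (P Q : lmodType R) (f : {linear P -> Q}),
      fgfree_lmod P -> fgfree_lmod Q -> normal_form (@fgfree_lmod R) x f).
Proof.
(* [m <> 0] is witnessed by [x] *)
move=> m_local _ m_sq0 m_gen m_x x_neq0.
have m_Rx a : m a <-> exists r, a = r * x by case: (m_gen x m_x x_neq0 a).
have m_xR a : m a <-> exists r, a = x * r by case: (m_gen x m_x x_neq0 a).
have free_nf := free_normal_form m_local m_sq0 m_xR m_Rx x_neq0.
split=> [P Q f|P Q f [P_free P_fg] [Q_free Q_fg]]; first exact: free_nf.
exact/(normal_form_fgfree P_fg Q_fg)/free_nf.
Qed.
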